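(* Let $\mathcal L$ be a summable category with finite products strictly preserved by $S$. For objects $X_0,X_1$ put $\psi^0_{X_0,X_1}=SX_0\,\&\,\iota_{0,X_1}\in\mathcal L(SX_0\& X_1,S(X_0\& X_1))$ and $\psi^1_{X_0,X_1}=\iota_{0,X_0}\,\&\,SX_1\in\mathcal L(X_0\& SX_1,S(X_0\& X_1))$. Then, as morphisms $SX_0\& SX_1\to S^2(X_0\& X_1)$ in $\mathcal L$, $$c_{X_0\&X_1}\circ S(\psi^0_{X_0,X_1})\circ\psi^1_{SX_0,X_1}=S(\psi^1_{X_0,X_1})\circ\psi^0_{X_0,SX_1}.$$
   Context: $\mathcal L$ is a category with zero morphisms equipped with a summability structure: a functor $S$ and natural transformations $\pi_0,\pi_1,\sigma:S\Rightarrow\mathrm{Id}$, $\pi_0,\pi_1$ jointly monic, satisfying the axioms of summable categories of Ehrhard's coherent differentiation; $f_0,f_1\in\mathcal L(X,Y)$ are summable if there is (a necessarily unique) $\langle f_0,f_1\rangle\in\mathcal L(X,SY)$ with $\pi_i\circ\langle f_0,f_1\rangle=f_i$, and then $f_0+f_1=\sigma\circ\langle f_0,f_1\rangle$. Homsets are partial commutative monoids for this sum with neutral element $0$ and composition distributes over defined sums. $\iota_0=\langle\mathrm{id},0\rangle:\mathrm{Id}\Rightarrow S$, and the flip $c:S^2\Rightarrow S^2$ is the natural transformation characterised by $\pi_i\circ\pi_j\circ c=\pi_j\circ\pi_i$ ($i,j\in\{0,1\}$). $\mathcal L$ has finite cartesian products $X_0\& X_1$ with projections $p_0,p_1$, and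 $S$ preserves them strictly: $S(X_0\&X_1)=SX_0\& SX_1$ and $S p_i=p_i$. For morphisms $f_i$, $f_0\& f_1$ is the product of morphisms; an object written in place of a morphism denotes its identity. *)

Set Implicit Arguments.
Set Universe Polymorphism.

Record Category := {
  Ob :> Type;
  Hom : Ob -> Ob -> Type;
  comp : forall X Y Z : Ob, Hom Y Z -> Hom X Y -> Hom X Z;
  idm : forall X : Ob, Hom X X;
  comp_id_l : forall X Y (f : Hom X Y), comp (idm Y) f = f;
  comp_id_r : forall X Y (f : Hom X Y), comp f (idm X) = f;
  comp_assoc : forall X Y Z W (h : Hom Z W) (g : Hom Y Z) (f : Hom X Y),
      comp h (comp g f) = comp (comp h g) f
}.
Arguments Hom {c} _ _.
Arguments comp {c X Y Z} _ _.
Arguments idm {c} _.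

Definition castHom (C : Category) (A A' B B' : C) (ea : A = A') (eb : B = B')
  (f : Hom A B) : Hom A' B' :=
  match ea in _ = A1 return Hom A1 B' with
  | eq_refl => match eb in _ = B1 return Hom A B1 with eq_refl => f end
  end.
Arguments castHom {C A A' B B'} ea eb f.

Record SummableCat := {
  cat :> Category;
  zero : forall X Y : cat, Hom X Y;
  comp_zero_l : forall X Y Z (f : Hom X Y), comp (zero Y Z) f = zero X Z;
  comp_zero_r : forall X Y Z (g : Hom Y Z), comp g (zero X Y) = zero X Z;
  Sob : cat -> cat;
  Smap : forall X Y : cat, Hom X Y -> Hom (Sob X) (Sob Y);
  Smap_id : forall X, Smap _ _ (idm X) = idm (Sob X);
  Smap_comp : forall X Y Z (g : Hom Y Z) (f : Hom X Y),
      Smap _ _ (comp g f) = comp (Smap _ _ g) (Smap _ _ f);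
  pi0 : forall X, Hom (Sob X) X;
  pi1 : forall X, Hom (Sob X) X;
  sigma : forall X, Hom (Sob X) X;
  pi0_nat : forall X Y (f : Hom X Y), comp f (pi0 X) = comp (pi0 Y) (Smap _ _ f);
  pi1_nat : forall X Y (f : Hom X Y), comp f (pi1 X) = comp (pi1 Y) (Smap _ _ f);
  sigma_nat : forall X Y (f : Hom X Y), comp f (sigma X) = comp (sigma Y) (Smap _ _ f);
  pi_jmonic : forall Z X (f g : Hom Z (Sob X)),
      comp (pi0 X) f = comp (pi0 X) g -> comp (pi1 X) f = comp (pi1 X) g -> f = g;
  (* summability axioms, in the form: the partial sum
     f0 + f1 = sigma o <f0,f1> (defined iff a witness <f0,f1> exists)
     makes homsets partial commutative monoids with neutral element 0, and
     composition distributes over defined sums *)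
  sum_zero : forall X Y (f : Hom X Y),
      exists h : Hom X (Sob Y), comp (pi0 Y) h = f /\ comp (pi1 Y) h = zero X Y
                              /\ comp (sigma Y) h = f;
  sum_comm : forall X Y (f0 f1 g : Hom X Y),
      (exists h, comp (pi0 Y) h = f0 /\ comp (pi1 Y) h = f1 /\ comp (sigma Y) h = g) ->
      (exists h, comp (pi0 Y) h = f1 /\ comp (pi1 Y) h = f0 /\ comp (sigma Y) h = g);
  sum_assoc : forall X Y (f0 f1 f2 g01 g : Hom X Y),
      (exists h, comp (pi0 Y) h = f0 /\ comp (pi1 Y) h = f1 /\ comp (sigma Y) h = g01) ->
      (exists h, comp (pi0 Y) h = g01 /\ comp (pi1 Y) h = f2 /\ comp (sigma Y) h = g) ->
      exists g12 : Hom X Y,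
        (exists h, comp (pi0 Y) h = f1 /\ comp (pi1 Y) h = f2 /\ comp (sigma Y) h = g12) /\
        (exists h, comp (pi0 Y) h = f0 /\ comp (pi1 Y) h = g12 /\ comp (sigma Y) h = g);
  sum_comp_r : forall W X Y (k : Hom W X) (f0 f1 g : Hom X Y),
      (exists h, comp (pi0 Y) h = f0 /\ comp (pi1 Y) h = f1 /\ comp (sigma Y) h = g) ->
      (exists h, comp (pi0 Y) h = comp f0 k /\ comp (pi1 Y) h = comp f1 k
                 /\ comp (sigma Y) h = comp g k);
  sum_comp_l : forall X Y Z (k : Hom Y Z) (f0 f1 g : Hom X Y),
      (exists h, comp (pi0 Y) h = f0 /\ comp (pi1 Y) h = f1 /\ comp (sigma Y) h = g) ->
      (exists h, comp (pi0 Z) h = comp k f0 /\ comp (pi1 Z) h = comp k f1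
                 /\ comp (sigma Z) h = comp k g);
  iota0 : forall X, Hom X (Sob X);
  pi0_iota0 : forall X, comp (pi0 X) (iota0 X) = idm X;
  pi1_iota0 : forall X, comp (pi1 X) (iota0 X) = zero X X;
  flip : forall X, Hom (Sob (Sob X)) (Sob (Sob X));
  flip_00 : forall X, comp (pi0 X) (comp (pi0 (Sob X)) (flip X))
                      = comp (pi0 X) (pi0 (Sob X));
  flip_01 : forall X, comp (pi0 X) (comp (pi1 (Sob X)) (flip X))
                      = comp (pi1 X) (pi0 (Sob X));
  flip_10 : forall X, comp (pi1 X) (comp (pi0 (Sob X)) (flip X))
                      = comp (pi0 X) (pi1 (Sob X));
  flip_11 : forall X, comp (pi1 X) (comp (pi1 (Sob X)) (flip X))
                      = comp (pi1 X) (pi1 (Sob X));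
  term : cat;
  bang : forall X, Hom X term;
  bang_unique : forall X (f : Hom X term), f = bang X;
  prodO : cat -> cat -> cat;
  p0 : forall X0 X1, Hom (prodO X0 X1) X0;
  p1 : forall X0 X1, Hom (prodO X0 X1) X1;
  pairP : forall Z X0 X1, Hom Z X0 -> Hom Z X1 -> Hom Z (prodO X0 X1);
  p0_pair : forall Z X0 X1 (f0 : Hom Z X0) (f1 : Hom Z X1),
      comp (p0 X0 X1) (pairP _ _ _ f0 f1) = f0;
  p1_pair : forall Z X0 X1 (f0 : Hom Z X0) (f1 : Hom Z X1),
      comp (p1 X0 X1) (pairP _ _ _ f0 f1) = f1;
  pair_unique : forall Z X0 X1 (h : Hom Z (prodO X0 X1)),
      h = pairP _ _ _ (comp (p0 X0 X1) h) (comp (p1 X0 X1) h);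
  S_term : Sob term = term;
  S_prodO : forall X0 X1, Sob (prodO X0 X1) = prodO (Sob X0) (Sob X1);
  S_p0 : forall X0 X1,
      Smap _ _ (p0 X0 X1) = @castHom cat _ _ _ _ (eq_sym (S_prodO X0 X1)) eq_refl (p0 (Sob X0) (Sob X1));
  S_p1 : forall X0 X1,
      Smap _ _ (p1 X0 X1) = @castHom cat _ _ _ _ (eq_sym (S_prodO X0 X1)) eq_refl (p1 (Sob X0) (Sob X1))
}.

Arguments zero {s} X Y.
Arguments Sob {s} X.
Arguments Smap {s X Y} f.
Arguments pi0 {s} X.
Arguments pi1 {s} X.
Arguments sigma {s} X.
Arguments iota0 {s} X.
Arguments flip {s} X.
Arguments prodO {s} X0 X1.
Arguments p0 {s} X0 X1.
Arguments p1 {s} X0 X1.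
Arguments pairP {s Z X0 X1} _ _.

Definition prodM {L : SummableCat} (A0 A1 B0 B1 : L)
  (f0 : Hom A0 B0) (f1 : Hom A1 B1) : Hom (prodO A0 A1) (prodO B0 B1) :=
  pairP (comp f0 (p0 A0 A1)) (comp f1 (p1 A0 A1)).
Arguments prodM {L A0 A1 B0 B1} f0 f1.

Definition psi0 {L : SummableCat} (X0 X1 : L)
  : Hom (prodO (Sob X0) X1) (Sob (prodO X0 X1)) :=
  castHom eq_refl (eq_sym (S_prodO L X0 X1)) (prodM (idm (Sob X0)) (iota0 X1)).

Definition psi1 {L : SummableCat} (X0 X1 : L)
  : Hom (prodO X0 (Sob X1)) (Sob (prodO X0 X1)) :=
  castHom eq_refl (eq_sym (S_prodO L X0 X1)) (prodM (iota0 X0) (idm (Sob X1))).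


(* Both sides are morphisms into S^2(X0 & X1), so by joint monicity of pi0, pi1
   (used twice) they are determined by their components pi_i o pi_j.  Pushing
   these through S, the flip and the psi's leaves products of projections pi_k
   and of the coordinates delta_k of iota0 = <id, 0>: the left-hand side gives
   (pi_j o delta_i) & (delta_j o pi_i), the right-hand side
   (delta_i o pi_j) & (pi_i o delta_j).  Since delta_k is either the identity or
   zero, it commutes with every morphism, and the two sides agree. *)

Section SummableProducts.
Context {L : SummableCat}.

Definition pi (i : bool) (X : L) : Hom (Sob X) X := if i then pi1 X else pi0 X.

Definition delta (i : bool) (X : L) : Hom X X := if i then zero X X else idm X.

Lemma pi_ext (X Z : L) (f g : Hom Z (Sob X)) :
  (forall i, comp (pi i X) f = comp (pi i X) g) -> f = g.
Proof. intros H. apply pi_jmonic; [apply (H false) | apply (H true)]. Qed.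

Lemma pi_Smap_comp (X Y Z : L) (i : bool) (f : Hom X Y) (g : Hom Z (Sob X)) :
  comp (pi i Y) (comp (Smap f) g) = comp f (comp (pi i X) g).
Proof.
  rewrite !comp_assoc. destruct i; simpl; [rewrite pi1_nat | rewrite pi0_nat];
  reflexivity.
Qed.

Lemma pi_flip_comp (X Z : L) (i j : bool) (g : Hom Z (Sob (Sob X))) :
  comp (pi i X) (comp (pi j (Sob X)) (comp (flip X) g))
  = comp (pi j X) (comp (pi i (Sob X)) g).
Proof.
  rewrite (comp_assoc _ _ _ _ _ (pi j (Sob X))), comp_assoc.
  destruct i, j; simpl;
    [rewrite flip_11 | rewrite flip_10 | rewrite flip_01 | rewrite flip_00];
  rewrite <- comp_assoc; reflexivity.
Qed.

Lemma pi_iota0 (X : L) (i : bool) : comp (pi i X) (iota0 X) = delta i X.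
Proof. destruct i; simpl; [apply pi1_iota0 | apply pi0_iota0]. Qed.

Lemma delta_nat (X Y : L) (i : bool) (f : Hom X Y) :
  comp f (delta i X) = comp (delta i Y) f.
Proof.
  destruct i; simpl.
  - rewrite comp_zero_r, comp_zero_l. reflexivity.
  - rewrite comp_id_r, comp_id_l. reflexivity.
Qed.

Lemma prod_ext (A B Z : L) (f g : Hom Z (prodO A B)) :
  comp (p0 A B) f = comp (p0 A B) g -> comp (p1 A B) f = comp (p1 A B) g -> f = g.
Proof.
  intros H0 H1. rewrite (pair_unique _ _ _ _ f), (pair_unique _ _ _ _ g), H0, H1.
  reflexivity.
Qed.

Lemma p0_prodM_comp (A0 A1 B0 B1 Z : L) (f0 : Hom A0 B0) (f1 : Hom A1 B1)
  (h : Hom Z (prodO A0 A1)) :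
  comp (p0 B0 B1) (comp (prodM f0 f1) h) = comp f0 (comp (p0 A0 A1) h).
Proof. unfold prodM. rewrite !comp_assoc, p0_pair. reflexivity. Qed.

Lemma p1_prodM_comp (A0 A1 B0 B1 Z : L) (f0 : Hom A0 B0) (f1 : Hom A1 B1)
  (h : Hom Z (prodO A0 A1)) :
  comp (p1 B0 B1) (comp (prodM f0 f1) h) = comp f1 (comp (p1 A0 A1) h).
Proof. unfold prodM. rewrite !comp_assoc, p1_pair. reflexivity. Qed.

Lemma prodM_comp (A0 A1 B0 B1 C0 C1 : L) (g0 : Hom B0 C0) (g1 : Hom B1 C1)
  (f0 : Hom A0 B0) (f1 : Hom A1 B1) :
  comp (prodM g0 g1) (prodM f0 f1) = prodM (comp g0 f0) (comp g1 f1).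
Proof.
  apply prod_ext.
  - rewrite p0_prodM_comp. unfold prodM. rewrite !p0_pair, comp_assoc. reflexivity.
  - rewrite p1_prodM_comp. unfold prodM. rewrite !p1_pair, comp_assoc. reflexivity.
Qed.

Lemma comp_castHom_sym (A A' B Z : L) (e : A = A') (f : Hom A' B) (h : Hom Z A') :
  comp (castHom (eq_sym e) eq_refl f) (castHom eq_refl (eq_sym e) h) = comp f h.
Proof. destruct e. reflexivity. Qed.

Lemma Smap_p0_cast (A B Z : L) (h : Hom Z (prodO (Sob A) (Sob B))) :
  comp (Smap (p0 A B)) (castHom eq_refl (eq_sym (S_prodO L A B)) h)
  = comp (p0 (Sob A) (Sob B)) h.
Proof. rewrite S_p0. apply comp_castHom_sym. Qed.

Lemma Smap_p1_cast (A B Z : L) (h : Hom Z (prodO (Sob A) (Sob B))) :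
  comp (Smap (p1 A B)) (castHom eq_refl (eq_sym (S_prodO L A B)) h)
  = comp (p1 (Sob A) (Sob B)) h.
Proof. rewrite S_p1. apply comp_castHom_sym. Qed.

Lemma pi_prodO_cast (A B Z : L) (i : bool) (h : Hom Z (prodO (Sob A) (Sob B))) :
  comp (pi i (prodO A B)) (castHom eq_refl (eq_sym (S_prodO L A B)) h)
  = comp (prodM (pi i A) (pi i B)) h.
Proof.
  apply prod_ext.
  - rewrite p0_prodM_comp, <- pi_Smap_comp, Smap_p0_cast. reflexivity.
  - rewrite p1_prodM_comp, <- pi_Smap_comp, Smap_p1_cast. reflexivity.
Qed.

Lemma pi_psi0 (X0 X1 : L) (i : bool) :
  comp (pi i (prodO X0 X1)) (psi0 X0 X1) = prodM (pi i X0) (delta i X1).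
Proof.
  unfold psi0. rewrite pi_prodO_cast, prodM_comp, comp_id_r, pi_iota0.
  reflexivity.
Qed.

Lemma pi_psi1 (X0 X1 : L) (i : bool) :
  comp (pi i (prodO X0 X1)) (psi1 X0 X1) = prodM (delta i X0) (pi i X1).
Proof.
  unfold psi1. rewrite pi_prodO_cast, prodM_comp, comp_id_r, pi_iota0.
  reflexivity.
Qed.

End SummableProducts.

Theorem mainTheorem3 (L : SummableCat) (X0 X1 : L) :
  comp (flip (prodO X0 X1)) (comp (Smap (psi0 X0 X1)) (psi1 (Sob X0) X1))
  = comp (Smap (psi1 X0 X1)) (psi0 X0 (Sob X1)).
Proof.
  apply pi_ext. intros j. apply pi_ext. intros i.
  rewrite pi_flip_comp, !pi_Smap_comp.
  rewrite (comp_assoc _ _ _ _ _ (pi j _) (psi0 _ _)),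
    (comp_assoc _ _ _ _ _ (pi i _) (psi1 _ _)).
  rewrite !pi_psi0, !pi_psi1, !prodM_comp.
  rewrite (delta_nat _ _ i (pi j X0)), (delta_nat _ _ j (pi i X1)).
  reflexivity.
Qed.
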